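(* Let $a>b\geq c>d>0$ and let $p,q$ be real numbers with $p,q\notin\{0,-1\}$. Then $$\frac{L_{p}^{p}(a,b)}{L_{p}^{p}(c,d)}\geq \frac{L_{q}^{q}(a,b)}{L_{q}^{q}(c,d)}\left(1+\frac{p-q}{q+1}\,\ln\frac{I(a^{q+1},b^{q+1})}{I(c^{q+1},d^{q+1})}\right),$$ with equality if and only if $p=q$. In particular, $$\exp\left(1-\frac{L(c,d)}{L(a,b)}\right)<\frac{I(a,b)}{I(c,d)}<\exp\left(\frac{L(a,b)}{L(c,d)}-1\right),$$ and for all $a>b>0$, $$\exp\left(1-\frac{b}{L(a,b)}\right)<\frac{I(a,b)}{b}<\exp\left(\frac{L(a,b)}{b}-1\right).$$
   Context: For $u,v>0$: the logarithmic mean is $L(u,v)=\frac{u-v}{\ln u-\ln v}$ if $u\neq v$ and $L(u,u)=u$; the identric mean is $I(u,v)=\frac{1}{e}\left(\frac{u^u}{v^v}\right)^{1/(u-v)}$ if $u\neq v$ and $I(u,u)=u$; for $p\neq 0,-1$ the $p$-logarithmic mean is $L_p(u,v)=\left(\frac{u^{p+1}-v^{p+1}}{(p+1)(u-v)}\right)^{1/p}$ if $u\neq v$ and $L_p(u,u)=u$. $L_p^p$ denotes the $p$-th power of $L_p$. *)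

From Stdlib Require Export Reals.
Open Scope R_scope.

Definition logmean (u v : R) : R :=
  if Req_EM_T u v then u else (u - v) / (ln u - ln v).

Definition identric (u v : R) : R :=
  if Req_EM_T u v then u
  else / exp 1 * Rpower (Rpower u u / Rpower v v) (/ (u - v)).

Definition plogmean (p u v : R) : R :=
  if Req_EM_T u v then u
  else Rpower ((Rpower u (p + 1) - Rpower v (p + 1)) / ((p + 1) * (u - v))) (/ p).

Definition plogmean_pow (p u v : R) : R := Rpower (plogmean p u v) p.

From Stdlib Require Import Reals Lra Psatz.
From Coquelicot Require Import Coquelicot.

(* With [l = ln u - ln v] and [x = p + 1], both [L_p^p(u,v)] and
   [ln I(u^x, v^x)] are expressed through [phi y = y e^y / (e^y - 1)] and
   [psi = (ln phi)'] evaluated at [x l].  After this substitution the main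
   inequality is the tangent inequality for the concave function [ln phi] at
   [(q+1) (ln a - ln b)], multiplied by the tangent inequality for the convex
   function [phi] at [(q+1) (ln c - ln d)], followed by [1 + t <= e^t].
   The bounds on [I(a,b)/I(c,d)] come from the elementary estimates
   [1 + y psi y < phi y] and [phi y (1 - y psi y) < 1] for [y > 0]. *)

Lemma mvt_punctured (f df : R -> R) (s t : R) :
  (forall y, y <> 0 -> derivable_pt_lim f y (df y)) ->
  s < t -> 0 < s \/ t < 0 ->
  exists c, f t - f s = df c * (t - s) /\ s < c < t.
Proof.
  intros Hd Hst Hs. apply MVT_cor2; [exact Hst|].
  intros c Hc. apply Hd. destruct Hs; lra.
Qed.

Lemma pos_mul_of_deriv_pos (f df : R -> R) :
  f 0 = 0 -> (forall y, derivable_pt_lim f y (df y)) ->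
  (forall y, y <> 0 -> 0 < df y) ->
  forall y, y <> 0 -> 0 < y * f y.
Proof.
  intros Hf0 Hd Hdf y Hy.
  destruct (Rlt_or_le 0 y) as [Hpos|Hneg].
  - destruct (MVT_cor2 f df 0 y Hpos (fun c _ => Hd c)) as [c [Hc Hcy]].
    rewrite Hf0, !Rminus_0_r in Hc. assert (0 < df c) by (apply Hdf; lra).
    rewrite Hc. apply Rmult_lt_0_compat; [lra | apply Rmult_lt_0_compat; lra].
  - destruct (MVT_cor2 f df y 0 ltac:(lra) (fun c _ => Hd c)) as [c [Hc Hcy]].
    rewrite Hf0 in Hc. assert (0 < df c) by (apply Hdf; lra).
    assert (Hfy : f y = df c * y) by lra. rewrite Hfy.
    replace (y * (df c * y)) with (df c * (y * y)) by ring.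
    apply Rmult_lt_0_compat; nra.
Qed.

Lemma strict_increasing_punctured (f df : R -> R) (c : R) :
  (forall y, y <> 0 -> derivable_pt_lim f y (df y)) ->
  (forall y, y <> 0 -> 0 < df y) ->
  (forall y, y <> 0 -> 0 < y * (f y - c)) ->
  forall s t, s <> 0 -> t <> 0 -> s < t -> f s < f t.
Proof.
  intros Hd Hdf Hc s t Hs Ht Hst.
  destruct (Rlt_or_le 0 s) as [Hs0|Hs0]; [|destruct (Rlt_or_le t 0) as [Ht0|Ht0]].
  - destruct (mvt_punctured f df s t Hd Hst (or_introl Hs0)) as [x [Hx Hxst]].
    assert (0 < df x) by (apply Hdf; lra). nra.
  - destruct (mvt_punctured f df s t Hd Hst (or_intror Ht0)) as [x [Hx Hxst]].
    assert (0 < df x) by (apply Hdf; lra). nra.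
  - pose proof (Hc s Hs). pose proof (Hc t Ht).
    assert (f s < c) by nra. assert (c < f t) by nra. lra.
Qed.

(* Tangent inequality for a function known to be differentiable only off [0]:
   the gap at [0] is bridged by [f_odd_part], which says that [f] crosses [0]
   with slope [c], the common one-sided limit of [df] there. *)
Section PuncturedConvexity.
Variables (f df : R -> R) (c : R).
Hypothesis f_deriv : forall y, y <> 0 -> derivable_pt_lim f y (df y).
Hypothesis df_increasing : forall s t, s <> 0 -> t <> 0 -> s < t -> df s < df t.
Hypothesis df_sign : forall y, y <> 0 -> 0 < y * (df y - c).
Hypothesis f_odd_part : forall e, 0 < e -> f e - f (-e) = 2 * c * e.

Lemma secant_bounds_same_sign s t : s < t -> 0 < s \/ t < 0 ->
  df s * (t - s) < f t - f s < df t * (t - s).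
Proof.
  intros Hst Hs.
  destruct (mvt_punctured f df s t f_deriv Hst Hs) as [x [Hx Hxst]].
  assert (s <> 0 /\ t <> 0 /\ x <> 0) as [Hs0 [Ht0 Hx0]] by (destruct Hs; lra).
  pose proof (df_increasing s x Hs0 Hx0 (proj1 Hxst)).
  pose proof (df_increasing x t Hx0 Ht0 (proj2 Hxst)).
  split; nra.
Qed.

Lemma secant_bounds s t : s <> 0 -> t <> 0 -> s < t ->
  df s * (t - s) < f t - f s < df t * (t - s).
Proof.
  intros Hs Ht Hst.
  destruct (Rlt_or_le 0 s) as [Hs0|Hs0].
  { exact (secant_bounds_same_sign s t Hst (or_introl Hs0)). }
  destruct (Rlt_or_le t 0) as [Ht0|Ht0].
  { exact (secant_bounds_same_sign s t Hst (or_intror Ht0)). }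
  set (e := Rmin (-s) t / 2).
  assert (He : 0 < e /\ e < -s /\ e < t)
    by (unfold e, Rmin; destruct (Rle_dec (-s) t); lra).
  destruct (secant_bounds_same_sign s (-e) ltac:(lra) (or_intror (ltac:(lra) : -e < 0))).
  destruct (secant_bounds_same_sign e t ltac:(lra) (or_introl (ltac:(lra) : 0 < e))).
  pose proof (f_odd_part e (proj1 He)).
  pose proof (df_sign s Hs). pose proof (df_sign t Ht).
  pose proof (df_sign (-e) ltac:(lra)). pose proof (df_sign e ltac:(lra)).
  assert (df s < c /\ c < df t /\ df (-e) < c /\ c < df e) as [? [? [? ?]]]
    by (repeat split; nra).
  split; nra.
Qed.

Lemma tangent_lt_punctured y y0 : y <> 0 -> y0 <> 0 -> y <> y0 ->
  f y0 + (y - y0) * df y0 < f y.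
Proof.
  intros Hy Hy0 Hne.
  destruct (Rlt_or_le y y0) as [Hlt|Hle].
  - destruct (secant_bounds y y0 Hy Hy0 Hlt). nra.
  - destruct (secant_bounds y0 y Hy0 Hy ltac:(lra)). nra.
Qed.

End PuncturedConvexity.

Lemma mul_expm1_pos y : y <> 0 -> 0 < y * (exp y - 1).
Proof.
  intros Hy. pose proof (exp_ineq1 y Hy).
  destruct (Rlt_or_le 0 y); [nra|].
  assert (exp y < 1) by (rewrite <- exp_0; apply exp_increasing; lra). nra.
Qed.

Lemma expm1_neq0 y : y <> 0 -> exp y - 1 <> 0.
Proof. intros Hy E. pose proof (mul_expm1_pos y Hy) as Hpos. rewrite E in Hpos. lra. Qed.

Lemma exp_mul_one_sub_lt_one y : y <> 0 -> exp y * (1 - y) < 1.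
Proof.
  intros Hy. pose proof (exp_ineq1 (-y) ltac:(lra)) as Hexp. rewrite exp_Ropp in Hexp.
  pose proof (exp_pos y). apply (Rmult_lt_compat_l (exp y)) in Hexp; [|lra].
  rewrite Rinv_r in Hexp; lra.
Qed.

(* [tanh (y/2) < y/2] for [y > 0], cleared of denominators. *)
Lemma tanh_half_gap_sign y : y <> 0 -> 0 < y * (y * (exp y + 1) - 2 * (exp y - 1)).
Proof.
  apply (pos_mul_of_deriv_pos (fun y => y * (exp y + 1) - 2 * (exp y - 1))
    (fun y => 1 - exp y * (1 - y))).
  - rewrite exp_0; ring.
  - intro z. apply is_derive_Reals. auto_derive; auto. ring.
  - intros z Hz. pose proof (exp_mul_one_sub_lt_one z Hz). lra.
Qed.

Lemma sinh_gap_sign y : y <> 0 -> 0 < y * (exp y - / exp y - 2 * y).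
Proof.
  apply (pos_mul_of_deriv_pos (fun y => exp y - / exp y - 2 * y)
    (fun y => (exp y - 1) ^ 2 / exp y)).
  - rewrite exp_0; field.
  - intro z. pose proof (exp_pos z). apply is_derive_Reals.
    auto_derive; [lra|]. field. lra.
  - intros z Hz. pose proof (exp_pos z).
    apply Rdiv_lt_0_compat; [|lra]. apply pow2_gt_0, expm1_neq0, Hz.
Qed.

Lemma sqr_mul_exp_lt_sqr_expm1 y : y <> 0 -> y ^ 2 * exp y < (exp y - 1) ^ 2.
Proof.
  intro Hy. pose proof (sinh_gap_sign (y / 2) ltac:(lra)) as Hsinh.
  set (s := exp (y / 2)) in *.
  assert (Hs : exp y = s * s) by (unfold s; rewrite <- exp_plus; f_equal; lra).
  assert (0 < s) by apply exp_pos.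
  replace (s - / s) with ((s * s - 1) / s) in Hsinh by (field; lra).
  assert (y ^ 2 < ((s * s - 1) / s) ^ 2).
  { destruct (Rlt_or_le 0 y).
    - assert (y < (s * s - 1) / s) by nra. nra.
    - assert ((s * s - 1) / s < y) by nra. nra. }
  assert (((s * s - 1) / s) ^ 2 * (s * s) = (s * s - 1) ^ 2) by (field; lra).
  rewrite Hs. nra.
Qed.

(* [phi] and [psi] extend continuously to [0] by [1] and [1/2], but these
   definitions are junk there; everything below stays away from [0]. *)
Definition phi (y : R) : R := y * exp y / (exp y - 1).
Definition psi (y : R) : R := / y - / (exp y - 1).

Lemma phi_pos y : y <> 0 -> 0 < phi y.
Proof.
  intro Hy. pose proof (mul_expm1_pos y Hy). pose proof (exp_pos y).
  pose proof (expm1_neq0 y Hy).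
  replace (phi y) with (y * (exp y - 1) * exp y / (exp y - 1) ^ 2)
    by (unfold phi; field; auto).
  apply Rdiv_lt_0_compat; [nra | apply pow2_gt_0; auto].
Qed.

Lemma phi_opp y : y <> 0 -> phi (- y) = phi y * exp (- y).
Proof.
  intro Hy. pose proof (expm1_neq0 y Hy). pose proof (exp_pos y).
  assert (exp (- y) - 1 <> 0) by (apply expm1_neq0; lra).
  unfold phi. rewrite exp_Ropp in *. field. split; lra.
Qed.

Lemma phi_sub_phi_opp y : y <> 0 -> phi y - phi (- y) = y.
Proof.
  intro Hy. pose proof (expm1_neq0 y Hy). pose proof (exp_pos y).
  rewrite phi_opp, exp_Ropp by exact Hy. unfold phi. field. split; lra.
Qed.

Lemma phi_eq y : y <> 0 -> phi y = 1 + y - y * psi y.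
Proof. intro Hy. pose proof (expm1_neq0 y Hy). unfold phi, psi. field. auto. Qed.

Lemma phi_mul_exp_opp y : y <> 0 -> phi y * exp (- y) = 1 - y * psi y.
Proof.
  intro Hy. pose proof (expm1_neq0 y Hy). pose proof (exp_pos y).
  unfold phi, psi. rewrite exp_Ropp. field. repeat split; lra.
Qed.

Lemma psi_bounds y : y <> 0 -> 0 < psi y < 1.
Proof.
  intro Hy. pose proof (mul_expm1_pos y Hy) as Hpos. pose proof (expm1_neq0 y Hy).
  pose proof (exp_ineq1 y Hy). pose proof (exp_mul_one_sub_lt_one y Hy).
  replace (psi y) with ((exp y - 1 - y) / (y * (exp y - 1)))
    by (unfold psi; field; auto).
  split.
  - apply Rdiv_lt_0_compat; lra.
  - apply (Rmult_lt_reg_r (y * (exp y - 1))); [exact Hpos|].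
    unfold Rdiv. rewrite Rmult_assoc, Rinv_l; nra.
Qed.

Lemma phi_derive y : y <> 0 -> derivable_pt_lim phi y (phi y * psi y).
Proof.
  intro Hy. pose proof (expm1_neq0 y Hy). apply is_derive_Reals. unfold phi, psi.
  auto_derive; auto. field; auto.
Qed.

Lemma phi_psi_derive y : y <> 0 ->
  derivable_pt_lim (fun z => phi z * psi z) y
    (exp y * (y * (exp y + 1) - 2 * (exp y - 1)) / (exp y - 1) ^ 3).
Proof.
  intro Hy. pose proof (expm1_neq0 y Hy). apply is_derive_Reals. unfold phi, psi.
  auto_derive; [repeat split; auto|]. field; auto.
Qed.

Lemma phi_psi_sign y : y <> 0 -> 0 < y * (phi y * psi y - 1 / 2).
Proof.
  intro Hy. pose proof (sinh_gap_sign y Hy) as Hsinh. pose proof (exp_pos y).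
  pose proof (expm1_neq0 y Hy) as Hne. pose proof (pow2_gt_0 _ Hne).
  replace (y * (phi y * psi y - 1 / 2)) with
    (exp y / (2 * (exp y - 1) ^ 2) * (y * (exp y - / exp y - 2 * y)))
    by (unfold phi, psi; field; lra).
  apply Rmult_lt_0_compat; [|exact Hsinh]. apply Rdiv_lt_0_compat; lra.
Qed.

Lemma phi_psi_increasing s t : s <> 0 -> t <> 0 -> s < t ->
  phi s * psi s < phi t * psi t.
Proof.
  apply (strict_increasing_punctured _ _ (1 / 2) phi_psi_derive); [|exact phi_psi_sign].
  intros y Hy. pose proof (tanh_half_gap_sign y Hy). pose proof (mul_expm1_pos y Hy).
  pose proof (exp_pos y). pose proof (expm1_neq0 y Hy) as Hne.
  set (g := y * (exp y + 1) - 2 * (exp y - 1)) in *.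
  assert (0 < g * (exp y - 1)) by (destruct (Rlt_or_le 0 y); nra).
  replace (exp y * g / (exp y - 1) ^ 3)
    with (exp y * (g * (exp y - 1)) / ((exp y - 1) ^ 2) ^ 2) by (field; auto).
  apply Rdiv_lt_0_compat; [nra|]. apply pow2_gt_0, pow_nonzero, Hne.
Qed.

Lemma phi_tangent_lt y y0 : y <> 0 -> y0 <> 0 -> y <> y0 ->
  phi y0 * (1 + (y - y0) * psi y0) < phi y.
Proof.
  intros Hy Hy0 Hne.
  pose proof (tangent_lt_punctured phi (fun z => phi z * psi z) (1 / 2)
    phi_derive phi_psi_increasing phi_psi_sign) as T.
  assert (Hodd : forall e, 0 < e -> phi e - phi (- e) = 2 * (1 / 2) * e)
    by (intros e He; rewrite phi_sub_phi_opp; lra).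
  specialize (T Hodd y y0 Hy Hy0 Hne). lra.
Qed.

Lemma psi_derive y : y <> 0 ->
  derivable_pt_lim psi y (- / y ^ 2 + exp y / (exp y - 1) ^ 2).
Proof.
  intro Hy. pose proof (expm1_neq0 y Hy). apply is_derive_Reals. unfold psi.
  auto_derive; auto. field; auto.
Qed.

Lemma half_sub_psi_sign y : y <> 0 -> 0 < y * (1 / 2 - psi y).
Proof.
  intro Hy. pose proof (tanh_half_gap_sign y Hy). pose proof (mul_expm1_pos y Hy).
  pose proof (expm1_neq0 y Hy).
  replace (y * (1 / 2 - psi y)) with
    (y * (y * (exp y + 1) - 2 * (exp y - 1)) / (2 * (y * (exp y - 1))))
    by (unfold psi; field; auto).
  apply Rdiv_lt_0_compat; lra.
Qed.

Lemma psi_decreasing s t : s <> 0 -> t <> 0 -> s < t -> - psi s < - psi t.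
Proof.
  apply (strict_increasing_punctured (fun y => - psi y)
    (fun y => - (- / y ^ 2 + exp y / (exp y - 1) ^ 2)) (- 1 / 2)).
  - intros y Hy. apply derivable_pt_lim_opp, psi_derive, Hy.
  - intros y Hy. pose proof (sqr_mul_exp_lt_sqr_expm1 y Hy).
    pose proof (expm1_neq0 y Hy) as Hne. pose proof (pow2_gt_0 y Hy).
    pose proof (pow2_gt_0 _ Hne).
    replace (- (- / y ^ 2 + exp y / (exp y - 1) ^ 2)) with
      (((exp y - 1) ^ 2 - y ^ 2 * exp y) / (y ^ 2 * (exp y - 1) ^ 2))
      by (field; auto).
    apply Rdiv_lt_0_compat; nra.
  - intros y Hy. pose proof (half_sub_psi_sign y Hy). lra.
Qed.

Lemma opp_ln_phi_derive y : y <> 0 ->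
  derivable_pt_lim (fun z => - ln (phi z)) y (- psi y).
Proof.
  intro Hy. pose proof (expm1_neq0 y Hy). pose proof (phi_pos y Hy).
  apply is_derive_Reals. unfold phi in *.
  auto_derive; [repeat split; auto|]. unfold psi. field.
  pose proof (exp_pos y). repeat split; auto. intro E. nra.
Qed.

(* Concavity of [ln phi], exponentiated. *)
Lemma phi_lt_mul_exp y y0 : y <> 0 -> y0 <> 0 -> y <> y0 ->
  phi y < phi y0 * exp ((y - y0) * psi y0).
Proof.
  intros Hy Hy0 Hne.
  assert (Hsign : forall z, z <> 0 -> 0 < z * (- psi z - - 1 / 2))
    by (intros z Hz; pose proof (half_sub_psi_sign z Hz); lra).
  assert (Hodd : forall e, 0 < e ->
      - ln (phi e) - - ln (phi (- e)) = 2 * (- 1 / 2) * e).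
  { intros e He. pose proof (phi_pos e ltac:(lra)).
    rewrite phi_opp, ln_mult, ln_exp by (try apply exp_pos; lra). lra. }
  pose proof (tangent_lt_punctured (fun z => - ln (phi z)) (fun z => - psi z) (- 1 / 2)
    opp_ln_phi_derive psi_decreasing Hsign Hodd y y0 Hy Hy0 Hne) as T.
  pose proof (phi_pos y Hy). pose proof (phi_pos y0 Hy0).
  rewrite <- (exp_ln (phi y)), <- (exp_ln (phi y0)), <- exp_plus by assumption.
  apply exp_increasing. simpl in T. lra.
Qed.

Lemma one_add_mul_lt_mul r s e Y Z : 0 <= s -> 0 < e -> 0 < Y ->
  1 + r * e < Y -> exp (r * s) < Z -> 1 + r * (s + e) < Z * Y.
Proof.
  intros Hs He HY HeY HsZ. pose proof (exp_ineq1_le (r * s)).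
  destruct (Rle_or_lt 0 (1 + r * e)).
  - assert ((1 + r * s) * (1 + r * e) <= exp (r * s) * Y).
    { apply Rle_trans with (exp (r * s) * (1 + r * e)).
      - apply Rmult_le_compat_r; lra.
      - apply Rmult_le_compat_l; [pose proof (exp_pos (r * s)) |]; lra. }
    assert (exp (r * s) * Y < Z * Y) by (apply Rmult_lt_compat_r; lra).
    assert (0 <= r * r * (s * e)) by (apply Rmult_le_pos; [apply Rle_0_sqr | nra]).
    assert ((1 + r * s) * (1 + r * e) = 1 + r * (s + e) + r * r * (s * e)) by ring.
    lra.
  - assert (r < 0) by nra. assert (r * s <= 0) by nra.
    pose proof (exp_pos (r * s)). nra.
Qed.

(* Concavity of [ln phi] at [x0 A] and convexity of [phi] at [x0 B]. *)
Lemma phi_ratio_tangent_lt x x0 A B delta : 0 < A -> A <= delta -> 0 < B ->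
  x <> 0 -> x0 <> 0 -> x <> x0 ->
  exp (x0 * delta) * phi (x0 * B) / phi (x0 * A) *
    (1 + (x - x0) * (delta - A * psi (x0 * A) + B * psi (x0 * B)))
  < exp (x * delta) * phi (x * B) / phi (x * A).
Proof.
  intros HA HAdelta HB Hx Hx0 Hne.
  assert (Hnz : forall l y, 0 < l -> y <> 0 -> y * l <> 0)
    by (intros; apply Rmult_integral_contrapositive; split; lra).
  assert (HneA : x * A <> x0 * A) by (intro E; apply Hne; apply (Rmult_eq_reg_r A); lra).
  assert (HneB : x * B <> x0 * B) by (intro E; apply Hne; apply (Rmult_eq_reg_r B); lra).
  pose proof (phi_lt_mul_exp _ _ (Hnz A x HA Hx) (Hnz A x0 HA Hx0) HneA) as Hconcave.
  pose proof (phi_tangent_lt _ _ (Hnz B x HB Hx) (Hnz B x0 HB Hx0) HneB) as Hconvex.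
  pose proof (psi_bounds _ (Hnz A x0 HA Hx0)) as [HpsiA0 HpsiA1].
  pose proof (psi_bounds _ (Hnz B x0 HB Hx0)) as [HpsiB0 HpsiB1].
  pose proof (phi_pos _ (Hnz A x HA Hx)). pose proof (phi_pos _ (Hnz A x0 HA Hx0)).
  pose proof (phi_pos _ (Hnz B x HB Hx)). pose proof (phi_pos _ (Hnz B x0 HB Hx0)).
  set (r := x - x0). set (eA := A * psi (x0 * A)). set (eB := B * psi (x0 * B)).
  replace ((x * A - x0 * A) * psi (x0 * A)) with (r * eA) in Hconcave
    by (unfold r, eA; ring).
  replace (x * B - x0 * B) with (r * B) in Hconvex by (unfold r; ring).
  assert (HeA : eA < A)
    by (unfold eA; pose proof (Rmult_lt_compat_l A _ _ HA HpsiA1); lra).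
  assert (HeB : 0 < eB) by (apply Rmult_lt_0_compat; lra).
  assert (Hkey : 1 + r * ((delta - eA) + eB) <
      exp (r * delta) * phi (x0 * A) / phi (x * A) * (phi (x * B) / phi (x0 * B))).
  { apply one_add_mul_lt_mul; [lra | exact HeB | apply Rdiv_lt_0_compat; lra | |].
    - apply (Rmult_lt_reg_r (phi (x0 * B))); [lra|].
      replace (phi (x * B) / phi (x0 * B) * phi (x0 * B)) with (phi (x * B))
        by (field; lra).
      unfold eB. lra.
    - replace (r * delta) with (r * (delta - eA) + r * eA) by ring. rewrite exp_plus.
      apply (Rmult_lt_reg_r (phi (x * A))); [lra|].
      pose proof (exp_pos (r * (delta - eA))).
      replace (exp (r * (delta - eA)) * exp (r * eA) * phi (x0 * A) / phi (x * A)
                 * phi (x * A))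
        with (exp (r * (delta - eA)) * (phi (x0 * A) * exp (r * eA))) by (field; lra).
      apply Rmult_lt_compat_l; lra. }
  replace (exp (x * delta)) with (exp (x0 * delta) * exp (r * delta))
    by (rewrite <- exp_plus; f_equal; unfold r; ring).
  pose proof (exp_pos (x0 * delta)).
  replace (exp (x0 * delta) * exp (r * delta) * phi (x * B) / phi (x * A)) with
    (exp (x0 * delta) * phi (x0 * B) / phi (x0 * A) *
     (exp (r * delta) * phi (x0 * A) / phi (x * A) * (phi (x * B) / phi (x0 * B))))
    by (field; lra).
  apply Rmult_lt_compat_l; [apply Rdiv_lt_0_compat; [apply Rmult_lt_0_compat|]; lra|].
  replace (delta - eA + eB) with ((delta - eA) + eB) by ring. exact Hkey.
Qed.

Lemma mul_psi_lt_half y : 0 < y -> 2 * (y * psi y) < y.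
Proof. intro Hy. pose proof (half_sub_psi_sign y ltac:(lra)). nra. Qed.

Lemma sqr_phi_lt_exp y : y <> 0 -> phi y ^ 2 < exp y.
Proof.
  intro Hy. pose proof (sqr_mul_exp_lt_sqr_expm1 y Hy) as Hsq. pose proof (exp_pos y).
  pose proof (expm1_neq0 y Hy) as Hne. pose proof (pow2_gt_0 _ Hne).
  apply (Rmult_lt_reg_r ((exp y - 1) ^ 2 / exp y)); [apply Rdiv_lt_0_compat; lra|].
  replace (phi y ^ 2 * ((exp y - 1) ^ 2 / exp y)) with (y ^ 2 * exp y)
    by (unfold phi; field; lra).
  replace (exp y * ((exp y - 1) ^ 2 / exp y)) with ((exp y - 1) ^ 2) by (field; lra).
  exact Hsq.
Qed.

Lemma mul_psi_pos y : 0 < y -> 0 < y * psi y.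
Proof. intro Hy. apply Rmult_lt_0_compat; [|apply psi_bounds]; lra. Qed.

Lemma mul_psi_lt_one y : y <> 0 -> y * psi y < 1.
Proof.
  intro Hy. pose proof (phi_mul_exp_opp y Hy).
  pose proof (Rmult_lt_0_compat _ _ (phi_pos y Hy) (exp_pos (- y))). lra.
Qed.

Lemma one_add_mul_psi_lt_phi y : 0 < y -> 1 + y * psi y < phi y.
Proof. intro Hy. rewrite phi_eq by lra. pose proof (mul_psi_lt_half y Hy). lra. Qed.

Lemma phi_mul_one_sub_mul_psi_lt_one y : y <> 0 -> phi y * (1 - y * psi y) < 1.
Proof.
  intro Hy. rewrite <- phi_mul_exp_opp by exact Hy.
  pose proof (sqr_phi_lt_exp y Hy). pose proof (exp_pos y).
  replace (phi y * (phi y * exp (- y))) with (phi y ^ 2 / exp y)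
    by (rewrite exp_Ropp; field; lra).
  apply (Rmult_lt_reg_r (exp y)); [lra|]. unfold Rdiv.
  rewrite Rmult_assoc, Rinv_l; lra.
Qed.

(* [Phi] and [eps] stand for [phi z] and [z psi z] with [z > 0], or for
   their limits [1] and [0] at [z = 0]. *)
Lemma one_sub_exp_phi_lt y delta Phi eps : 0 < y -> y <= delta ->
  0 < Phi -> 0 <= eps <= 1 -> Phi * (1 - eps) <= 1 ->
  1 - exp (- delta) * phi y / Phi < delta - y * psi y + eps.
Proof.
  intros Hy Hydelta HPhi Heps HPhieps.
  pose proof (mul_psi_lt_half y Hy).
  pose proof (phi_pos y ltac:(lra)). pose proof (exp_pos (- y)).
  pose proof (mul_psi_pos y Hy) as Heta0. pose proof (mul_psi_lt_one y ltac:(lra)) as Heta1.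
  assert (Hexp : exp (- delta) * phi y = exp (- (delta - y)) * (1 - y * psi y)).
  { rewrite <- phi_mul_exp_opp by lra.
    rewrite (Rmult_comm (phi y)), <- Rmult_assoc, <- exp_plus. do 3 f_equal. ring. }
  set (eta := y * psi y) in *. set (t := delta - y) in *.
  pose proof (exp_ineq1_le (- t)) as Ht.
  assert (HinvPhi : 1 - eps <= / Phi).
  { apply (Rmult_le_reg_l Phi); [lra|]. rewrite Rinv_r; lra. }
  assert (Hprod : 0 <= (1 - eta) * (1 - eps)) by (apply Rmult_le_pos; lra).
  assert (Hlow : (1 - t) * ((1 - eta) * (1 - eps)) <= exp (- delta) * phi y / Phi).
  { unfold Rdiv. rewrite Hexp.
    apply Rle_trans with (exp (- t) * ((1 - eta) * (1 - eps))).
    - apply Rmult_le_compat_r; lra.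
    - rewrite Rmult_assoc. apply Rmult_le_compat_l; [pose proof (exp_pos (- t)); lra|].
      apply Rmult_le_compat_l; lra. }
  assert (0 <= t * (eta + eps - eta * eps)) by (apply Rmult_le_pos; [unfold t; lra | nra]).
  assert (0 <= eta * eps) by nra.
  unfold t in *. nra.
Qed.

Lemma lt_exp_phi_sub_one y delta Phi eps : 0 < y -> y <= delta ->
  0 <= eps -> 1 + eps <= Phi ->
  delta - y * psi y + eps < exp delta * Phi / phi y - 1.
Proof.
  intros Hy Hydelta Heps HPhi.
  pose proof (mul_psi_lt_half y Hy). pose proof (sqr_phi_lt_exp y ltac:(lra)).
  pose proof (phi_eq y ltac:(lra)) as Hφ. pose proof (phi_pos y ltac:(lra)) as Hφ0.
  pose proof (mul_psi_pos y Hy) as Heta0.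
  pose proof (exp_ineq1_le (delta - y)) as Ht.
  assert (HX : 1 + delta - y * psi y < exp delta / phi y).
  { replace (exp delta / phi y) with (exp (delta - y) * (exp y / phi y))
      by (unfold Rdiv; rewrite <- Rmult_assoc, <- exp_plus; do 3 f_equal; ring).
    assert (phi y < exp y / phi y)
      by (apply (Rmult_lt_reg_r (phi y)); [lra|]; unfold Rdiv;
          rewrite Rmult_assoc, Rinv_l; nra).
    assert ((1 + (delta - y)) * phi y < exp (delta - y) * (exp y / phi y)).
    { apply Rle_lt_trans with (exp (delta - y) * phi y).
      - apply Rmult_le_compat_r; lra.
      - apply Rmult_lt_compat_l; [apply exp_pos | assumption]. }
    nra. }
  replace (exp delta * Phi / phi y) with (exp delta / phi y * Phi) by (field; lra).
  assert (exp delta / phi y * (1 + eps) <= exp delta / phi y * Phi)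
    by (apply Rmult_le_compat_l; lra).
  nra.
Qed.

Lemma ln_sub_pos u v : v < u -> 0 < v -> 0 < ln u - ln v.
Proof. intros Hvu Hv. pose proof (ln_increasing v u Hv Hvu). lra. Qed.

Lemma exp_ln_sub u v : 0 < u -> 0 < v -> exp (ln u - ln v) = u / v.
Proof.
  intros Hu Hv. rewrite <- ln_div by assumption.
  apply exp_ln, Rdiv_lt_0_compat; assumption.
Qed.

Lemma exp_mul_ln_split x u v :
  exp (x * ln u) = exp (x * (ln u - ln v)) * exp (x * ln v).
Proof. rewrite <- exp_plus. f_equal. ring. Qed.

Lemma plogmean_pow_eq p u v : v < u -> 0 < v -> p <> 0 -> p <> -1 ->
  plogmean_pow p u v =
  exp ((p + 1) * ln u) * (ln u - ln v) / ((u - v) * phi ((p + 1) * (ln u - ln v))).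
Proof.
  intros Hvu Hv Hp Hp1.
  pose proof (ln_sub_pos u v Hvu Hv) as Hl.
  assert (Hxl : (p + 1) * (ln u - ln v) <> 0)
    by (apply Rmult_integral_contrapositive; lra).
  pose proof (phi_pos _ Hxl). pose proof (expm1_neq0 _ Hxl).
  assert (HQ : (Rpower u (p + 1) - Rpower v (p + 1)) / ((p + 1) * (u - v)) =
      exp ((p + 1) * ln u) * (ln u - ln v) / ((u - v) * phi ((p + 1) * (ln u - ln v)))).
  { unfold Rpower. rewrite (exp_mul_ln_split (p + 1) u v).
    pose proof (exp_pos ((p + 1) * ln v)). pose proof (exp_pos ((p + 1) * (ln u - ln v))).
    unfold phi. field. repeat split; lra. }
  assert (HQpos : 0 < (Rpower u (p + 1) - Rpower v (p + 1)) / ((p + 1) * (u - v))).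
  { rewrite HQ. pose proof (exp_pos ((p + 1) * ln u)).
    apply Rdiv_lt_0_compat; [|apply Rmult_lt_0_compat]; nra. }
  unfold plogmean_pow, plogmean. destruct (Req_EM_T u v); [lra|].
  rewrite Rpower_mult, Rinv_l, Rpower_1 by assumption. exact HQ.
Qed.

Lemma identric_pos u v : 0 < u -> 0 < v -> 0 < identric u v.
Proof.
  intros Hu Hv. unfold identric. destruct (Req_EM_T u v); [assumption|].
  apply Rmult_lt_0_compat; [apply Rinv_0_lt_compat, exp_pos | apply exp_pos].
Qed.

Lemma ln_identric u v : 0 < u -> 0 < v -> u <> v ->
  ln (identric u v) = (u * ln u - v * ln v) / (u - v) - 1.
Proof.
  intros Hu Hv Hne. unfold identric. destruct (Req_EM_T u v); [lra|].
  rewrite ln_mult by (try apply Rinv_0_lt_compat; apply exp_pos).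
  rewrite ln_Rinv, ln_exp by apply exp_pos.
  unfold Rpower. rewrite ln_exp, ln_div, !ln_exp by apply exp_pos.
  field. lra.
Qed.

Lemma ln_identric_pow u v x : v < u -> 0 < v -> x <> 0 ->
  ln (identric (Rpower u x) (Rpower v x)) =
  x * (ln u - (ln u - ln v) * psi (x * (ln u - ln v))).
Proof.
  intros Hvu Hv Hx.
  pose proof (ln_sub_pos u v Hvu Hv) as Hl.
  assert (Hxl : x * (ln u - ln v) <> 0) by (apply Rmult_integral_contrapositive; lra).
  pose proof (expm1_neq0 _ Hxl) as HE.
  pose proof (exp_pos (x * ln v)). pose proof (exp_pos (x * (ln u - ln v))).
  assert (Hne : Rpower u x <> Rpower v x).
  { unfold Rpower. rewrite (exp_mul_ln_split x u v). intro E. apply HE. nra. }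
  rewrite ln_identric by (unfold Rpower; try apply exp_pos; exact Hne).
  unfold Rpower. rewrite !ln_exp, (exp_mul_ln_split x u v). unfold psi. field.
  repeat split; try lra. intro E. apply HE. nra.
Qed.

Lemma ln_identric_eq u v : v < u -> 0 < v ->
  ln (identric u v) = ln u - (ln u - ln v) * psi (ln u - ln v).
Proof.
  intros Hvu Hv. pose proof (ln_identric_pow u v 1 Hvu Hv ltac:(lra)) as Hpow.
  rewrite !Rpower_1, !Rmult_1_l in Hpow by lra. exact Hpow.
Qed.

Lemma logmean_eq u v : v < u -> 0 < v -> logmean u v = u / phi (ln u - ln v).
Proof.
  intros Hvu Hv. pose proof (ln_sub_pos u v Hvu Hv).
  unfold logmean. destruct (Req_EM_T u v); [lra|].
  unfold phi. rewrite exp_ln_sub by lra. field. repeat split; lra.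
Qed.

Lemma plogmean_pow_ratio_eq p a b c d : b < a -> 0 < b -> d < c -> 0 < d ->
  p <> 0 -> p <> -1 ->
  plogmean_pow p a b / plogmean_pow p c d =
  (ln a - ln b) * (c - d) / ((ln c - ln d) * (a - b)) *
  (exp ((p + 1) * (ln a - ln c)) * phi ((p + 1) * (ln c - ln d)) /
   phi ((p + 1) * (ln a - ln b))).
Proof.
  intros Hba Hb Hdc Hd Hp Hp1.
  pose proof (ln_sub_pos a b Hba Hb). pose proof (ln_sub_pos c d Hdc Hd).
  pose proof (phi_pos ((p + 1) * (ln a - ln b))
    ltac:(apply Rmult_integral_contrapositive; lra)).
  pose proof (phi_pos ((p + 1) * (ln c - ln d))
    ltac:(apply Rmult_integral_contrapositive; lra)).
  pose proof (exp_pos ((p + 1) * ln c)).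
  rewrite !plogmean_pow_eq by lra. rewrite (exp_mul_ln_split (p + 1) a c).
  field. repeat split; lra.
Qed.

Lemma ln_identric_pow_ratio a b c d x : b < a -> 0 < b -> d < c -> 0 < d -> x <> 0 ->
  ln (identric (Rpower a x) (Rpower b x) / identric (Rpower c x) (Rpower d x)) =
  x * ((ln a - ln c) - (ln a - ln b) * psi (x * (ln a - ln b)) +
       (ln c - ln d) * psi (x * (ln c - ln d))).
Proof.
  intros Hba Hb Hdc Hd Hx.
  rewrite ln_div by (apply identric_pos; apply exp_pos).
  rewrite !ln_identric_pow by lra. ring.
Qed.

Lemma plogmean_pow_ratio_gt a b c d p q : b < a -> c <= b -> d < c -> 0 < d ->
  p <> 0 -> p <> -1 -> q <> 0 -> q <> -1 -> p <> q ->
  plogmean_pow q a b / plogmean_pow q c d *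
    (1 + (p - q) / (q + 1) *
       ln (identric (Rpower a (q + 1)) (Rpower b (q + 1)) /
           identric (Rpower c (q + 1)) (Rpower d (q + 1))))
  < plogmean_pow p a b / plogmean_pow p c d.
Proof.
  intros Hba Hcb Hdc Hd Hp Hp1 Hq Hq1 Hpq.
  pose proof (ln_sub_pos a b Hba ltac:(lra)). pose proof (ln_sub_pos c d Hdc Hd).
  pose proof (ln_le c b ltac:(lra) Hcb).
  rewrite ln_identric_pow_ratio, !plogmean_pow_ratio_eq by lra.
  assert (Hcoef : forall S, (p - q) / (q + 1) * ((q + 1) * S) = ((p + 1) - (q + 1)) * S)
    by (intro; field; lra).
  rewrite Hcoef, Rmult_assoc. apply Rmult_lt_compat_l.
  - apply Rdiv_lt_0_compat; apply Rmult_lt_0_compat; lra.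
  - apply phi_ratio_tangent_lt; lra.
Qed.

Lemma identric_ratio_bounds a b c d : b < a -> c <= b -> d < c -> 0 < d ->
  exp (1 - logmean c d / logmean a b) < identric a b / identric c d /\
  identric a b / identric c d < exp (logmean a b / logmean c d - 1).
Proof.
  intros Hba Hcb Hdc Hd.
  pose proof (ln_sub_pos a b Hba ltac:(lra)) as HA.
  pose proof (ln_sub_pos c d Hdc Hd) as HB.
  pose proof (ln_le c b ltac:(lra) Hcb).
  pose proof (phi_pos _ (Rgt_not_eq _ _ HA)). pose proof (phi_pos _ (Rgt_not_eq _ _ HB)).
  pose proof (mul_psi_lt_one _ (Rgt_not_eq _ _ HB)).
  pose proof (one_add_mul_psi_lt_phi _ HB).
  pose proof (phi_mul_one_sub_mul_psi_lt_one _ (Rgt_not_eq _ _ HB)).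
  pose proof (mul_psi_pos _ HB).
  assert (HI : identric a b / identric c d =
      exp ((ln a - ln c) - (ln a - ln b) * psi (ln a - ln b) +
           (ln c - ln d) * psi (ln c - ln d))).
  { rewrite <- (exp_ln (identric a b / identric c d))
      by (apply Rdiv_lt_0_compat; apply identric_pos; lra).
    rewrite ln_div, !ln_identric_eq by (try apply identric_pos; lra).
    f_equal. ring. }
  rewrite HI, !logmean_eq by lra.
  replace (c / phi (ln c - ln d) / (a / phi (ln a - ln b))) with
    (exp (- (ln a - ln c)) * phi (ln a - ln b) / phi (ln c - ln d))
    by (rewrite exp_Ropp, exp_ln_sub by lra; field; lra).
  replace (a / phi (ln a - ln b) / (c / phi (ln c - ln d))) with
    (exp (ln a - ln c) * phi (ln c - ln d) / phi (ln a - ln b))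
    by (rewrite exp_ln_sub by lra; field; lra).
  split; apply exp_increasing.
  - apply one_sub_exp_phi_lt; lra.
  - apply lt_exp_phi_sub_one; lra.
Qed.

Lemma identric_div_bounds a b : b < a -> 0 < b ->
  exp (1 - b / logmean a b) < identric a b / b /\
  identric a b / b < exp (logmean a b / b - 1).
Proof.
  intros Hba Hb.
  pose proof (ln_sub_pos a b Hba Hb) as HA.
  pose proof (phi_pos _ (Rgt_not_eq _ _ HA)).
  assert (HI : identric a b / b =
      exp ((ln a - ln b) - (ln a - ln b) * psi (ln a - ln b) + 0)).
  { rewrite <- (exp_ln (identric a b / b))
      by (apply Rdiv_lt_0_compat; [apply identric_pos|]; lra).
    rewrite ln_div, ln_identric_eq by (try apply identric_pos; lra).
    f_equal. ring. }
  rewrite HI, logmean_eq by lra.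
  replace (b / (a / phi (ln a - ln b))) with
    (exp (- (ln a - ln b)) * phi (ln a - ln b) / 1)
    by (rewrite exp_Ropp, exp_ln_sub by lra; field; lra).
  replace (a / phi (ln a - ln b) / b) with (exp (ln a - ln b) * 1 / phi (ln a - ln b))
    by (rewrite exp_ln_sub by lra; field; lra).
  split; apply exp_increasing.
  - apply one_sub_exp_phi_lt; lra.
  - apply lt_exp_phi_sub_one; lra.
Qed.

Theorem theorem3p1 :
  (forall a b c d : R, a > b -> b >= c -> c > d -> d > 0 ->
     (forall p q : R, p <> 0 -> p <> -1 -> q <> 0 -> q <> -1 ->
        let lhs := plogmean_pow p a b / plogmean_pow p c d in
        let rhs := plogmean_pow q a b / plogmean_pow q c d *
                   (1 + (p - q) / (q + 1) *
                        ln (identric (Rpower a (q + 1)) (Rpower b (q + 1)) /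
                            identric (Rpower c (q + 1)) (Rpower d (q + 1)))) in
        lhs >= rhs /\ (lhs = rhs <-> p = q)) /\
     (exp (1 - logmean c d / logmean a b) < identric a b / identric c d /\
      identric a b / identric c d < exp (logmean a b / logmean c d - 1))) /\
  (forall a b : R, a > b -> b > 0 ->
     exp (1 - b / logmean a b) < identric a b / b /\
     identric a b / b < exp (logmean a b / b - 1)).
Proof.
  split.
  - intros a b c d Hab Hbc Hcd Hd. split; [|apply identric_ratio_bounds; lra].
    intros p q Hp Hp1 Hq Hq1 lhs rhs.
    destruct (Req_dec p q) as [<-|Hpq].
    + assert (lhs = rhs)
        by (unfold lhs, rhs; replace ((p - p) / (p + 1)) with 0 by (field; lra); ring).
      split; [lra | tauto].
    + pose proof (plogmean_pow_ratio_gt a b c d p q) as Hgt.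
      fold lhs rhs in Hgt.
      assert (rhs < lhs) by (apply Hgt; lra).
      split; [lra | split; [lra | contradiction]].
  - intros a b Hab Hb. apply identric_div_bounds; lra.
Qed.
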